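(* For every integer $r\ge1$, $\big|\mathrm{Var}(\mu^{(r+1)})-\mathrm{Var}(\mu^{(r)})\big|\le b$.
   Context: Fix an integer $b\ge2$. For $n\in\mathbb{N}$ with base-$b$ digits $n_k$, $s(n):=\sum_kn_k$. For $r,n\in\mathbb{N}$, $\Delta^{(r)}(n):=s(n+r)-s(n)$, and $\mu^{(r)}(d):=\lim_{N\to\infty}\frac1N|\{n<N:\Delta^{(r)}(n)=d\}|$ for $d\in\mathbb{Z}$; these limits exist and $\mu^{(r)}$ is a probability measure on $\mathbb{Z}$ with finite moments. $\mathrm{Var}(\mu^{(r)})$ is its variance. *)

From Stdlib Require Import Reals Lra Lia ZArith Arith List.
From Coquelicot Require Import Coquelicot.
Open Scope R_scope.

Definition digit (b n k : nat) : nat := (n / b ^ k) mod b.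

(* base-b digit sum s(n) = sum_k n_k; digits with k > n vanish (b >= 2),
   so summing over k = 0..n gives all digits. *)
Definition s (b n : nat) : nat :=
  fold_right Nat.add 0%nat (map (digit b n) (seq 0 (S n))).

Definition Delta (b r n : nat) : Z :=
  (Z.of_nat (s b (n + r)) - Z.of_nat (s b n))%Z.

Definition countDelta (b r : nat) (d : Z) (N : nat) : nat :=
  length (filter (fun n => Z.eqb (Delta b r n) d) (seq 0 N)).

Definition mu (b r : nat) (d : Z) : R :=
  real (Lim_seq (fun N => INR (countDelta b r d N) / INR N)).

Definition zsum (f : Z -> R) : R :=
  f 0%Z + Series (fun k => f (Z.of_nat (S k)) + f (- Z.of_nat (S k))%Z).

Definition mean_mu (b r : nat) : R := zsum (fun d => IZR d * mu b r d).

Definition Var_mu (b r : nat) : R :=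
  zsum (fun d => (IZR d - mean_mu b r) ^ 2 * mu b r d).

From Stdlib Require Import Reals Lra Lia ZArith Arith List.
From Coquelicot Require Import Coquelicot.
Open Scope R_scope.

(* Splitting off the last base-b digit gives
     Delta^(r)(n) = t - b c + Delta^(q + c)(n / b),   q = r / b, t = r mod b,
   where the carry c in {0, 1} equals 1 for exactly t of the b residues of n mod b.
   Hence mu^(bq+t) is the mixture of mu^(q) shifted by t (weight (b - t)/b) and of
   mu^(q+1) shifted by t - b (weight t/b), for 0 <= t <= b.  All these laws have mean 0,
   so V_r := Var(mu^(r)) satisfies
     b V_(bq+t) = (b - t)(V_q + t^2) + t (V_(q+1) + (b - t)^2),
   whence V_(r+1) - V_r = (V_(q+1) - V_q)/b + (b - 1 - 2t).  As V_1 - V_0 = b (mu^(1) is a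
   geometric law of variance b), induction on r gives |V_(r+1) - V_r| <= 1 + (b - 1). *)

(** * Digit sums and the recursion for Delta *)

Definition digit_sum_upto (b x m : nat) : nat :=
  fold_right Nat.add 0%nat (map (digit b x) (seq 0 m)).

Lemma digit_sum_upto_succ_l b x m :
  digit_sum_upto b x (S m) = (x mod b + digit_sum_upto b (x / b) m)%nat.
Proof.
  unfold digit_sum_upto; simpl; f_equal.
  - unfold digit; now rewrite Nat.pow_0_r, Nat.div_1_r.
  - rewrite <- seq_shift, map_map; f_equal; apply map_ext; intro k.
    unfold digit; now rewrite Nat.pow_succ_r', Nat.Div0.div_div.
Qed.

Lemma digit_sum_upto_succ_r b x m :
  digit_sum_upto b x (S m) = (digit_sum_upto b x m + digit b x m)%nat.
Proof.
  unfold digit_sum_upto; rewrite seq_S, map_app, fold_right_app; simpl.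
  generalize (digit b x m).
  induction (map (digit b x) (seq 0 m)) as [|y l IH]; intros z; simpl; [lia|].
  rewrite IH; lia.
Qed.

Lemma digit_large b x k : (2 <= b)%nat -> (x <= k)%nat -> digit b x k = 0%nat.
Proof.
  intros hb hk; unfold digit.
  rewrite Nat.div_small; [apply Nat.Div0.mod_0_l|].
  pose proof (Nat.pow_gt_lin_r b k ltac:(lia)); lia.
Qed.

Lemma digit_sum_upto_stable b x m :
  (2 <= b)%nat -> (x <= m)%nat -> digit_sum_upto b x m = digit_sum_upto b x x.
Proof.
  intros hb; induction m as [|m IH]; intros hx.
  - now replace x with 0%nat by lia.
  - destruct (Nat.eq_dec x (S m)) as [->|]; [reflexivity|].
    rewrite digit_sum_upto_succ_r, digit_large, IH by lia; lia.
Qed.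

Lemma s_mod_div b n : (2 <= b)%nat -> s b n = (n mod b + s b (n / b))%nat.
Proof.
  intros hb.
  change (digit_sum_upto b n (S n) = (n mod b + digit_sum_upto b (n / b) (S (n / b)))%nat).
  assert (n / b <= n)%nat by (apply Nat.Div0.div_le_upper_bound; nia).
  rewrite digit_sum_upto_succ_l, (digit_sum_upto_stable b (n / b) n),
    (digit_sum_upto_stable b (n / b) (S (n / b))) by lia.
  reflexivity.
Qed.

Definition carry (b t a : nat) : nat := if Nat.leb b (a + t) then 1%nat else 0%nat.

Lemma Delta_mod_div b r n : (2 <= b)%nat ->
  let t := (r mod b)%nat in let c := carry b t (n mod b)%nat in
  Delta b r n = (Z.of_nat t - Z.of_nat b * Z.of_nat c + Delta b (r / b + c) (n / b))%Z.
Proof.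
  intros hb t c; unfold Delta, c, t, carry.
  rewrite (s_mod_div b (n + r)), (s_mod_div b n) by lia.
  pose proof (Nat.div_mod_eq n b); pose proof (Nat.div_mod_eq r b).
  pose proof (Nat.mod_upper_bound n b ltac:(lia)).
  pose proof (Nat.mod_upper_bound r b ltac:(lia)).
  destruct (Nat.leb_spec b (n mod b + r mod b)).
  - replace ((n + r) / b)%nat with (n / b + (r / b + 1))%nat
      by (apply (Nat.div_unique _ _ _ (n mod b + r mod b - b)); lia).
    replace ((n + r) mod b)%nat with (n mod b + r mod b - b)%nat
      by (apply (Nat.mod_unique _ _ (n / b + (r / b + 1))); lia).
    lia.
  - replace ((n + r) / b)%nat with (n / b + (r / b + 0))%nat
      by (apply (Nat.div_unique _ _ _ (n mod b + r mod b)); lia).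
    replace ((n + r) mod b)%nat with (n mod b + r mod b)%nat
      by (apply (Nat.mod_unique _ _ (n / b + (r / b + 0))); lia).
    lia.
Qed.

Lemma Delta_0 b n : Delta b 0 n = 0%Z.
Proof. unfold Delta; rewrite Nat.add_0_r; lia. Qed.

Lemma Delta_1_le b n : (2 <= b)%nat -> (Delta b 1 n <= 1)%Z.
Proof.
  intros hb; induction n as [n IH] using lt_wf_ind.
  rewrite Delta_mod_div by lia; cbv zeta.
  rewrite (Nat.mod_small 1 b), (Nat.div_small 1 b) by lia; unfold carry.
  destruct (Nat.leb_spec b (n mod b + 1)) as [Hc|Hc]; simpl Nat.add.
  - assert (n <> 0%nat) by (intros ->; rewrite Nat.Div0.mod_0_l in Hc; lia).
    specialize (IH (n / b)%nat ltac:(apply Nat.div_lt; lia)); lia.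
  - rewrite Delta_0; lia.
Qed.

(** * Natural densities *)

Definition count (P : nat -> bool) (N : nat) : nat := length (filter P (seq 0 N)).

Definition has_density (P : nat -> bool) (l : R) : Prop :=
  is_lim_seq (fun N => INR (count P N) / INR N) l.

Definition indicator (x : bool) : R := if x then 1 else 0.

Fixpoint sum_below (f : nat -> R) (n : nat) : R :=
  match n with O => 0 | S n => sum_below f n + f n end.

Lemma sum_below_ext f g n :
  (forall a, (a < n)%nat -> f a = g a) -> sum_below f n = sum_below g n.
Proof.
  induction n as [|n IH]; intros H; simpl; [reflexivity|].
  rewrite IH, H; [reflexivity|lia|intros; apply H; lia].
Qed.

Lemma sum_below_plus f g n :
  sum_below (fun a => f a + g a) n = sum_below f n + sum_below g n.
Proof. induction n as [|n IH]; simpl; [|rewrite IH]; lra. Qed.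

Lemma sum_below_mult_r f c n : sum_below (fun a => f a * c) n = sum_below f n * c.
Proof. induction n as [|n IH]; simpl; [|rewrite IH]; lra. Qed.

Lemma sum_below_indicator_bound (P : nat -> bool) k :
  0 <= sum_below (fun a => indicator (P a)) k <= INR k.
Proof.
  induction k as [|k IH]; simpl sum_below; [simpl; lra|].
  assert (0 <= indicator (P k) <= 1) by (unfold indicator; destruct (P k); lra).
  rewrite S_INR; lra.
Qed.

Lemma is_lim_seq_sum_below (u : nat -> nat -> R) (l : nat -> R) n :
  (forall a, (a < n)%nat -> is_lim_seq (u a) (l a)) ->
  is_lim_seq (fun N => sum_below (fun a => u a N) n) (sum_below l n).
Proof.
  induction n as [|n IH]; intros H; simpl.
  - apply is_lim_seq_const.
  - apply is_lim_seq_plus'; [apply IH; intros; apply H|apply H]; lia.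
Qed.

Lemma count_ext P P' N : (forall n, P n = P' n) -> count P N = count P' N.
Proof. intros H; unfold count; now rewrite (filter_ext _ _ H). Qed.

Lemma count_add P N k :
  INR (count P (N + k)) = INR (count P N) + sum_below (fun a => indicator (P (N + a)%nat)) k.
Proof.
  induction k as [|k IH]; simpl sum_below; [rewrite Nat.add_0_r; lra|].
  unfold count in *; rewrite Nat.add_succ_r, seq_S, filter_app, length_app, plus_INR, IH.
  simpl; unfold indicator; destruct (P (N + k)%nat); simpl; lra.
Qed.

Lemma count_mod_div (b : nat) (Q : nat -> nat -> bool) M : (1 <= b)%nat ->
  INR (count (fun n => Q (n mod b) (n / b))%nat (b * M)) =
  sum_below (fun a => INR (count (Q a) M)) b.
Proof.
  intros hb; induction M as [|M IH].
  - rewrite Nat.mul_0_r; unfold count; simpl; clear; induction b; simpl; lra.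
  - replace (b * S M)%nat with (b * M + b)%nat by lia.
    rewrite count_add, IH, <- sum_below_plus; apply sum_below_ext; intros a Ha.
    rewrite <- (Nat.mod_unique (b * M + a) b M a), <- (Nat.div_unique (b * M + a) b M a) by lia.
    rewrite <- Nat.add_1_r, count_add; simpl; rewrite Nat.add_0_r; lra.
Qed.

Lemma is_lim_seq_div_nat (b : nat) : (1 <= b)%nat ->
  is_lim_seq (fun N => INR (N / b)%nat / INR N) (/ INR b).
Proof.
  intros hb; assert (Hb : 0 < INR b) by (apply lt_0_INR; lia).
  assert (Hinv : is_lim_seq (fun N => / INR N) 0).
  { exact (is_lim_seq_inv _ _ is_lim_seq_INR ltac:(discriminate)). }
  apply is_lim_seq_le_le_loc with (fun N => / INR b - / INR N) (fun _ => / INR b).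
  - exists 1%nat; intros N HN.
    assert (HN' : 0 < INR N) by (apply lt_0_INR; lia).
    pose proof (Nat.div_mod_eq N b); pose proof (Nat.mod_upper_bound N b ltac:(lia)).
    assert (E : INR N = INR b * INR (N / b) + INR (N mod b))
      by (rewrite <- mult_INR, <- plus_INR; f_equal; lia).
    assert (INR (N mod b) + 1 <= INR b) by (rewrite <- S_INR; apply le_INR; lia).
    pose proof (pos_INR (N mod b)).
    replace (/ INR b - / INR N) with ((INR N - INR b) / (INR b * INR N)) by (field; lra).
    replace (INR (N / b) / INR N) with (INR b * INR (N / b) / (INR b * INR N)) by (field; lra).
    replace (/ INR b) with (INR N / (INR b * INR N)) by (field; lra).
    split; apply Rmult_le_compat_r; try lra; left; apply Rinv_0_lt_compat; nra.
  - pose proof (is_lim_seq_minus' _ _ _ _ (is_lim_seq_const (/ INR b)) Hinv) as H.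
    now rewrite Rminus_0_r in H.
  - apply is_lim_seq_const.
Qed.

Lemma has_density_const (P : nat -> bool) x :
  (forall n, P n = x) -> has_density P (indicator x).
Proof.
  intros HP; apply is_lim_seq_ext_loc with (fun _ => indicator x); [|apply is_lim_seq_const].
  exists 1%nat; intros N HN; unfold count; rewrite (filter_ext P (fun _ => x) HP).
  assert (HN' : INR N <> 0) by (apply not_0_INR; lia).
  destruct x; simpl.
  - rewrite List.filter_true, length_seq; field; exact HN'.
  - rewrite List.filter_false; simpl; unfold Rdiv; ring.
Qed.

Lemma has_density_mod_div (b : nat) (P : nat -> bool) (Q : nat -> nat -> bool) (l : nat -> R) :
  (1 <= b)%nat ->
  (forall n, P n = Q (n mod b) (n / b))%nat ->
  (forall a, (a < b)%nat -> has_density (Q a) (l a)) ->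
  has_density P (sum_below l b / INR b).
Proof.
  intros hb HP Hl; unfold has_density.
  set (A := fun N => sum_below (fun a => INR (count (Q a) (N / b)) / INR (N / b)%nat) b
                     * (INR (N / b)%nat / INR N)).
  assert (HA : is_lim_seq A (sum_below l b / INR b)).
  { apply is_lim_seq_mult'; [|apply is_lim_seq_div_nat; lia].
    apply (is_lim_seq_sum_below (fun a N => INR (count (Q a) (N / b)) / INR (N / b)%nat)).
    intros a Ha; apply (is_lim_seq_subseq (fun M => INR (count (Q a) M) / INR M)); [|now apply Hl].
    intros S [N0 HN0]; exists (b * N0)%nat; intros N HN; apply HN0.
    apply Nat.div_le_lower_bound; lia. }
  apply is_lim_seq_le_le_loc with A (fun N => A N + INR b / INR N).
  - exists 1%nat; intros N HN.
    assert (HN' : 0 < INR N) by (apply lt_0_INR; lia).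
    assert (EA : A N = INR (count P (b * (N / b))) / INR N).
    { rewrite (count_ext _ _ _ HP).
      rewrite count_mod_div by lia; unfold A, Rdiv; rewrite <- !sum_below_mult_r.
      apply sum_below_ext; intros a _.
      destruct (N / b)%nat as [|M]; [unfold count; simpl; ring|].
      field; split; apply not_0_INR; lia. }
    pose proof (Nat.div_mod_eq N b); pose proof (Nat.mod_upper_bound N b ltac:(lia)).
    replace (count P N) with (count P (b * (N / b) + N mod b)) by (f_equal; lia).
    rewrite count_add, EA.
    pose proof (sum_below_indicator_bound (fun a => P (b * (N / b) + a)%nat) (N mod b)).
    assert (INR (N mod b) <= INR b) by (apply le_INR; lia).
    unfold Rdiv; rewrite <- Rmult_plus_distr_r.
    split; apply Rmult_le_compat_r; try (left; apply Rinv_0_lt_compat); lra.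
  - exact HA.
  - pose proof (is_lim_seq_plus' _ _ _ _ HA (is_lim_seq_scal_l _ (INR b) _
      (is_lim_seq_inv _ _ is_lim_seq_INR ltac:(discriminate)))) as H.
    simpl in H; rewrite Rmult_0_r, Rplus_0_r in H; exact H.
Qed.

Lemma sum_below_carry b t x y : (t <= b)%nat ->
  sum_below (fun a => if Nat.leb b (a + t) then x else y) b = INR (b - t) * y + INR t * x.
Proof.
  intros ht.
  assert (H : forall n, sum_below (fun a => if Nat.leb b (a + t) then x else y) n =
                        INR (Nat.min n (b - t)) * y + INR (n - (b - t)) * x).
  { induction n as [|n IH]; simpl sum_below; [simpl; lra|].
    rewrite IH; destruct (Nat.leb_spec b (n + t)).
    - replace (Nat.min (S n) (b - t)) with (Nat.min n (b - t)) by lia.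
      replace (S n - (b - t))%nat with (S (n - (b - t))) by lia; rewrite S_INR; lra.
    - replace (Nat.min (S n) (b - t)) with (S (Nat.min n (b - t))) by lia.
      replace (S n - (b - t))%nat with (n - (b - t))%nat by lia; rewrite S_INR; lra. }
  rewrite H; replace (Nat.min b (b - t)) with (b - t)%nat by lia.
  now replace (b - (b - t))%nat with t by lia.
Qed.

(** * The recursion for mu *)

Definition Delta_eq (b r : nat) (d : Z) (n : nat) : bool := Z.eqb (Delta b r n) d.

Lemma Delta_eq_mod_div b r d n : (2 <= b)%nat ->
  let t := (r mod b)%nat in let c := carry b t (n mod b)%nat in
  Delta_eq b r d n =
  Delta_eq b (r / b + c) (d - Z.of_nat t + Z.of_nat b * Z.of_nat c) (n / b).
Proof.
  intros hb t c; unfold Delta_eq; rewrite Delta_mod_div by lia; fold t c.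
  destruct (Z.eqb_spec (Z.of_nat t - Z.of_nat b * Z.of_nat c + Delta b (r / b + c) (n / b)) d);
  destruct (Z.eqb_spec (Delta b (r / b + c) (n / b)) (d - Z.of_nat t + Z.of_nat b * Z.of_nat c));
  lia.
Qed.

Lemma has_density_Delta_eq_mod_div b r d (l : nat -> R) : (2 <= b)%nat ->
  let t := (r mod b)%nat in
  (forall a, (a < b)%nat ->
     let c := carry b t a in
     has_density (Delta_eq b (r / b + c) (d - Z.of_nat t + Z.of_nat b * Z.of_nat c)) (l a)) ->
  has_density (Delta_eq b r d) (sum_below l b / INR b).
Proof.
  intros hb t Hl; apply has_density_mod_div with
    (fun a => Delta_eq b (r / b + carry b t a) (d - Z.of_nat t + Z.of_nat b * Z.of_nat (carry b t a))).
  - lia.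
  - intros n; now apply Delta_eq_mod_div.
  - exact Hl.
Qed.

Lemma mu_of_has_density b r d l : has_density (Delta_eq b r d) l -> mu b r d = l.
Proof.
  intros H; unfold mu.
  change (fun N => INR (countDelta b r d N) / INR N)
    with (fun N => INR (count (Delta_eq b r d) N) / INR N).
  now rewrite (is_lim_seq_unique _ _ H).
Qed.

Lemma has_density_mu b r d :
  (exists l, has_density (Delta_eq b r d) l) -> has_density (Delta_eq b r d) (mu b r d).
Proof. intros [l Hl]; now rewrite (mu_of_has_density _ _ _ _ Hl). Qed.

Lemma has_density_Delta_eq b r d : (2 <= b)%nat -> has_density (Delta_eq b r d) (mu b r d).
Proof.
  intros hb; apply has_density_mu; revert d.
  induction r as [r IH] using lt_wf_ind.
  assert (Hstep : forall d,
    (forall a, (a < b)%nat -> let c := carry b (r mod b) a in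
       exists l, has_density (Delta_eq b (r / b + c) (d - Z.of_nat (r mod b) + Z.of_nat b * Z.of_nat c)) l) ->
    exists l, has_density (Delta_eq b r d) l).
  { intros d H.
    exists (sum_below (fun a => let c := carry b (r mod b) a in
              mu b (r / b + c) (d - Z.of_nat (r mod b) + Z.of_nat b * Z.of_nat c)) b / INR b).
    apply has_density_Delta_eq_mod_div; [lia|]; intros a Ha; now apply has_density_mu, H. }
  destruct (Nat.eq_dec r 0) as [->|Hr0].
  { intros d; exists (indicator (Z.eqb 0 d)); apply has_density_const.
    intros n; unfold Delta_eq; now rewrite Delta_0. }
  destruct (Nat.eq_dec r 1) as [->|Hr1].
  - (* for r = 1 the recursion refers to r = 1 itself, at a larger d; induct on 2 - d,
       since Delta_1 <= 1 *)
    intros d; remember (Z.to_nat (2 - d)) as k eqn:Hk; revert d Hk.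
    induction k as [k IHk] using lt_wf_ind; intros d Hk.
    destruct (Z_le_gt_dec 2 d).
    + exists (indicator false); apply has_density_const; intros n.
      unfold Delta_eq; apply Z.eqb_neq; pose proof (Delta_1_le b n hb); lia.
    + apply Hstep; intros a Ha c; unfold c, carry.
      rewrite (Nat.mod_small 1 b), (Nat.div_small 1 b) by lia.
      destruct (Nat.leb b (a + 1)); simpl Nat.add.
      * eapply IHk; [|reflexivity]; lia.
      * apply IH; lia.
  - intros d; apply Hstep; intros a Ha c; apply IH; unfold c, carry.
    pose proof (Nat.div_mod_eq r b); pose proof (Nat.mod_upper_bound r b ltac:(lia)).
    destruct (Nat.leb_spec b (a + r mod b)); nia.
Qed.

Lemma mu_mod_div b r d : (2 <= b)%nat ->
  let q := (r / b)%nat in let t := (r mod b)%nat in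
  mu b r d = (INR (b - t) * mu b q (d - Z.of_nat t) + INR t * mu b (q + 1) (d - Z.of_nat t + Z.of_nat b)) / INR b.
Proof.
  intros hb q t; pose proof (Nat.mod_upper_bound r b ltac:(lia)).
  apply mu_of_has_density.
  rewrite <- (sum_below_carry b t (mu b (q + 1) (d - Z.of_nat t + Z.of_nat b)) (mu b q (d - Z.of_nat t)))
    by (unfold t; lia).
  apply has_density_Delta_eq_mod_div; [lia|]; intros a Ha c.
  replace (if Nat.leb b (a + t) then _ else _)
    with (mu b (r / b + c) (d - Z.of_nat t + Z.of_nat b * Z.of_nat c)).
  - now apply has_density_Delta_eq.
  - unfold c, carry; fold t; destruct (Nat.leb b (a + t)); f_equal; lia.
Qed.

(* Allowing the last digit to be [t = b] makes the recursion uniform in [t]. *)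
Lemma mu_digit_rec b q t d : (2 <= b)%nat -> (t <= b)%nat ->
  mu b (b * q + t) d =
  (INR (b - t) * mu b q (d - Z.of_nat t) + INR t * mu b (q + 1) (d - Z.of_nat t + Z.of_nat b)) / INR b.
Proof.
  intros hb ht; assert (HB : INR b <> 0) by (apply not_0_INR; lia).
  destruct (Nat.eq_dec t b) as [->|Htb].
  - replace (b * q + b)%nat with (b * (q + 1) + 0)%nat by lia.
    rewrite mu_mod_div by lia; cbv zeta.
    rewrite <- (Nat.div_unique (b * (q + 1) + 0) b (q + 1) 0),
      <- (Nat.mod_unique (b * (q + 1) + 0) b (q + 1) 0) by lia.
    rewrite Nat.sub_0_r, Nat.sub_diag, Z.sub_0_r; simpl (INR 0).
    replace (d - Z.of_nat b + Z.of_nat b)%Z with d by lia; field; exact HB.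
  - rewrite mu_mod_div by lia; cbv zeta.
    now rewrite <- (Nat.div_unique (b * q + t) b q t), <- (Nat.mod_unique (b * q + t) b q t) by lia.
Qed.

Lemma mu_nonneg b r d : (2 <= b)%nat -> 0 <= mu b r d.
Proof.
  intros hb; refine (is_lim_seq_le (fun _ => 0) _ 0 _ _ (is_lim_seq_const 0)
                       (has_density_Delta_eq b r d hb)).
  intros [|N]; [simpl; unfold Rdiv; rewrite Rmult_0_l; lra|].
  apply Rdiv_le_0_compat; [apply pos_INR|apply lt_0_INR; lia].
Qed.

Lemma mu_0 b d : (2 <= b)%nat -> mu b 0 d = indicator (Z.eqb d 0).
Proof.
  intros hb; apply mu_of_has_density, has_density_const; intros n.
  unfold Delta_eq; now rewrite Delta_0, Z.eqb_sym.
Qed.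

Lemma mu_1_large b d : (2 <= b)%nat -> (2 <= d)%Z -> mu b 1 d = 0.
Proof.
  intros hb hd; apply (mu_of_has_density _ _ _ (indicator false)), has_density_const; intros n.
  unfold Delta_eq; apply Z.eqb_neq; pose proof (Delta_1_le b n hb); lia.
Qed.

Lemma mu_1_rec b d : (2 <= b)%nat ->
  mu b 1 d = (INR b - 1) / INR b * indicator (Z.eqb d 1) + / INR b * mu b 1 (d + (Z.of_nat b - 1)).
Proof.
  intros hb; pose proof (mu_digit_rec b 0 1 d hb ltac:(lia)) as H.
  rewrite Nat.mul_0_r in H; simpl (0 + 1)%nat in H; rewrite H, mu_0, minus_INR by lia.
  replace (d - Z.of_nat 1 =? 0)%Z with (d =? 1)%Z
    by (destruct (Z.eqb_spec d 1); destruct (Z.eqb_spec (d - Z.of_nat 1) 0); lia).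
  replace (d - Z.of_nat 1 + Z.of_nat b)%Z with (d + (Z.of_nat b - 1))%Z by lia.
  simpl (INR 1); field; apply not_0_INR; lia.
Qed.

(** * Sums over Z and moments *)

Fixpoint sum_sym (h : Z -> R) (K : nat) : R :=
  match K with
  | O => h 0%Z
  | S K' => sum_sym h K' + h (Z.of_nat K) + h (- Z.of_nat K)%Z
  end.

Definition is_zsum (h : Z -> R) (l : R) : Prop := is_lim_seq (sum_sym h) l.

Lemma sum_sym_as_sum_n h K :
  sum_sym h (S K) = h 0%Z + sum_n (fun k => h (Z.of_nat (S k)) + h (- Z.of_nat (S k))%Z) K.
Proof.
  induction K as [|K IH]; [rewrite sum_O; simpl; ring|].
  rewrite sum_Sn; change (sum_sym h (S (S K)))
    with (sum_sym h (S K) + h (Z.of_nat (S (S K))) + h (- Z.of_nat (S (S K)))%Z).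
  rewrite IH; unfold plus; simpl; ring.
Qed.

Lemma zsum_of_is_zsum h l : is_zsum h l -> zsum h = l.
Proof.
  intros H; unfold zsum.
  assert (Hs : is_series (fun k => h (Z.of_nat (S k)) + h (- Z.of_nat (S k))%Z) (l - h 0%Z)).
  { apply is_lim_seq_incr_1, (fun H => is_lim_seq_minus' _ _ _ _ H (is_lim_seq_const (h 0%Z))) in H.
    refine (is_lim_seq_ext _ _ _ _ H); intros K; rewrite sum_sym_as_sum_n.
    unfold Rminus; rewrite Rplus_comm, <- Rplus_assoc, Rplus_opp_l, Rplus_0_l; reflexivity. }
  rewrite (is_series_unique _ _ Hs); ring.
Qed.

Lemma sum_sym_ext h g K : (forall d, h d = g d) -> sum_sym h K = sum_sym g K.
Proof. intros H; induction K as [|K IH]; simpl; rewrite ?IH, ?H; reflexivity. Qed.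

Lemma sum_sym_plus h g K : sum_sym (fun d => h d + g d) K = sum_sym h K + sum_sym g K.
Proof. induction K as [|K IH]; simpl; rewrite ?IH; ring. Qed.

Lemma sum_sym_scal c h K : sum_sym (fun d => c * h d) K = c * sum_sym h K.
Proof. induction K as [|K IH]; simpl; rewrite ?IH; ring. Qed.

Lemma sum_sym_le_succ h K : (forall d, 0 <= h d) -> sum_sym h K <= sum_sym h (S K).
Proof.
  intros Hh; change (sum_sym h (S K)) with (sum_sym h K + h (Z.of_nat (S K)) + h (- Z.of_nat (S K))%Z).
  pose proof (Hh (Z.of_nat (S K))); pose proof (Hh (- Z.of_nat (S K))%Z); lra.
Qed.

Lemma is_zsum_ext h g l : (forall d, h d = g d) -> is_zsum h l -> is_zsum g l.
Proof. intros H; apply is_lim_seq_ext; intros K; now apply sum_sym_ext. Qed.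

Lemma is_zsum_plus h g l l' : is_zsum h l -> is_zsum g l' -> is_zsum (fun d => h d + g d) (l + l').
Proof.
  intros H H'; apply (is_lim_seq_ext (fun K => sum_sym h K + sum_sym g K));
    [intros K; now rewrite sum_sym_plus|now apply is_lim_seq_plus'].
Qed.

Lemma is_zsum_scal c h l : is_zsum h l -> is_zsum (fun d => c * h d) (c * l).
Proof.
  intros H; apply (is_lim_seq_ext (fun K => c * sum_sym h K));
    [intros K; now rewrite sum_sym_scal|apply (is_lim_seq_scal_l _ c l H)].
Qed.

Lemma is_zsum_unique h l l' : is_zsum h l -> is_zsum h l' -> l = l'.
Proof. intros H H'; apply is_lim_seq_unique in H, H'; rewrite H in H'; now injection H'. Qed.

Lemma is_zsum_of_bounded h C :
  (forall d, 0 <= h d) -> (forall K, sum_sym h K <= C) -> exists l, is_zsum h l.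
Proof.
  intros Hh HC; apply (ex_finite_lim_seq_incr (sum_sym h) C); [|exact HC].
  intros K; now apply sum_sym_le_succ.
Qed.

Lemma sum_sym_shift_succ h K :
  sum_sym (fun d => h (d + 1)%Z) K = sum_sym h K - h (- Z.of_nat K)%Z + h (Z.of_nat K + 1)%Z.
Proof.
  induction K as [|K IH]; [simpl; ring|].
  change (sum_sym (fun d => h (d + 1)%Z) (S K)) with
    (sum_sym (fun d => h (d + 1)%Z) K + h (Z.of_nat (S K) + 1)%Z + h (- Z.of_nat (S K) + 1)%Z).
  change (sum_sym h (S K)) with (sum_sym h K + h (Z.of_nat (S K)) + h (- Z.of_nat (S K))%Z).
  rewrite IH.
  replace (- Z.of_nat (S K) + 1)%Z with (- Z.of_nat K)%Z by lia.
  replace (Z.of_nat K + 1)%Z with (Z.of_nat (S K)) by lia; ring.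
Qed.

Lemma sum_sym_shift_pred h K :
  sum_sym (fun d => h (d - 1)%Z) K = sum_sym h K - h (Z.of_nat K) + h (- Z.of_nat K - 1)%Z.
Proof.
  induction K as [|K IH]; [simpl; ring|].
  change (sum_sym (fun d => h (d - 1)%Z) (S K)) with
    (sum_sym (fun d => h (d - 1)%Z) K + h (Z.of_nat (S K) - 1)%Z + h (- Z.of_nat (S K) - 1)%Z).
  change (sum_sym h (S K)) with (sum_sym h K + h (Z.of_nat (S K)) + h (- Z.of_nat (S K))%Z).
  rewrite IH.
  replace (Z.of_nat (S K) - 1)%Z with (Z.of_nat K) by lia.
  replace (- Z.of_nat K - 1)%Z with (- Z.of_nat (S K))%Z by lia; ring.
Qed.

Definition decays (h : Z -> R) : Prop :=
  is_lim_seq (fun K => h (Z.of_nat K)) 0 /\ is_lim_seq (fun K => h (- Z.of_nat K)%Z) 0.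

Lemma decays_ext h g : (forall d, h d = g d) -> decays h -> decays g.
Proof.
  intros E [H H']; split;
    [refine (is_lim_seq_ext _ _ _ _ H)|refine (is_lim_seq_ext _ _ _ _ H')]; intros; apply E.
Qed.

Lemma decays_plus h g : decays h -> decays g -> decays (fun d => h d + g d).
Proof.
  intros [H1 H2] [H3 H4]; split; rewrite <- (Rplus_0_r 0); now apply is_lim_seq_plus'.
Qed.

Lemma decays_scal c h : decays h -> decays (fun d => c * h d).
Proof.
  intros [H1 H2]; split; rewrite <- (Rmult_0_r c);
    [exact (is_lim_seq_scal_l _ c 0 H1)|exact (is_lim_seq_scal_l _ c 0 H2)].
Qed.

Lemma decays_dominated h g : (forall d, Rabs (h d) <= g d) -> decays g -> decays h.
Proof.
  intros Hg [H1 H2]; split; apply is_lim_seq_abs_0;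
    [apply is_lim_seq_le_le with (fun _ => 0) (fun K => g (Z.of_nat K))
    |apply is_lim_seq_le_le with (fun _ => 0) (fun K => g (- Z.of_nat K)%Z)];
    try (intros K; split; [apply Rabs_pos|apply Hg]); auto using is_lim_seq_const.
Qed.

Lemma decays_of_is_zsum h l : (forall d, 0 <= h d) -> is_zsum h l -> decays h.
Proof.
  intros Hh H.
  assert (Hpair : is_lim_seq (fun K => h (Z.of_nat (S K)) + h (- Z.of_nat (S K))%Z) 0).
  { pose proof (is_lim_seq_minus' _ _ _ _ (proj1 (is_lim_seq_incr_1 _ _) H) H) as H'.
    rewrite Rminus_eq_0 in H'; refine (is_lim_seq_ext _ _ _ _ H'); intros K; simpl; ring. }
  split; apply is_lim_seq_incr_1, is_lim_seq_le_le with (fun _ => 0)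
    (fun K => h (Z.of_nat (S K)) + h (- Z.of_nat (S K))%Z); auto using is_lim_seq_const;
    intros K; pose proof (Hh (Z.of_nat (S K))); pose proof (Hh (- Z.of_nat (S K))%Z); lra.
Qed.

(* Shifting by one moves one term out of the symmetric window and one term in; both
   terms tend to 0. *)
Lemma is_zsum_shift_one h l (e : Z) : (e = 1 \/ e = -1)%Z -> is_zsum h l -> decays h ->
  is_zsum (fun d => h (d + e)%Z) l /\ decays (fun d => h (d + e)%Z).
Proof.
  intros He H [H1 H2]; destruct He as [->| ->]; split.
  - apply (is_lim_seq_ext (fun K => sum_sym h K - h (- Z.of_nat K)%Z + h (Z.of_nat K + 1)%Z));
      [intros K; now rewrite sum_sym_shift_succ|].
    rewrite <- (Rplus_0_r l), <- (Rminus_0_r l) at 1; apply is_lim_seq_plus'; [now apply is_lim_seq_minus'|].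
    apply is_lim_seq_incr_1 in H1; refine (is_lim_seq_ext _ _ _ _ H1); intros K; f_equal; lia.
  - split; [apply is_lim_seq_incr_1 in H1|apply is_lim_seq_incr_1];
      [refine (is_lim_seq_ext _ _ _ _ H1)|refine (is_lim_seq_ext _ _ _ _ H2)]; intros K; f_equal; lia.
  - apply (is_lim_seq_ext (fun K => sum_sym h K - h (Z.of_nat K) + h (- Z.of_nat K - 1)%Z));
      [intros K; rewrite <- sum_sym_shift_pred; apply sum_sym_ext; intros d; f_equal; lia|].
    rewrite <- (Rplus_0_r l), <- (Rminus_0_r l) at 1; apply is_lim_seq_plus'; [now apply is_lim_seq_minus'|].
    apply is_lim_seq_incr_1 in H2; refine (is_lim_seq_ext _ _ _ _ H2); intros K; f_equal; lia.
  - split; [apply is_lim_seq_incr_1|apply is_lim_seq_incr_1 in H2];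
      [refine (is_lim_seq_ext _ _ _ _ H1)|refine (is_lim_seq_ext _ _ _ _ H2)]; intros K; f_equal; lia.
Qed.

Lemma is_zsum_shift h l (c : Z) : is_zsum h l -> decays h -> is_zsum (fun d => h (d + c)%Z) l.
Proof.
  intros H D.
  enough (is_zsum (fun d => h (d + c)%Z) l /\ decays (fun d => h (d + c)%Z)) by tauto.
  induction c as [|c IH|c IH] using Z.peano_ind.
  - split; [refine (is_zsum_ext _ _ _ _ H)|refine (decays_ext _ _ _ D)]; intros d; f_equal; lia.
  - destruct IH as [Hc Dc]; destruct (is_zsum_shift_one _ _ 1 ltac:(lia) Hc Dc) as [Hc' Dc'].
    split; [refine (is_zsum_ext _ _ _ _ Hc')|refine (decays_ext _ _ _ Dc')]; intros d; f_equal; lia.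
  - destruct IH as [Hc Dc]; destruct (is_zsum_shift_one _ _ (-1) ltac:(lia) Hc Dc) as [Hc' Dc'].
    split; [refine (is_zsum_ext _ _ _ _ Hc')|refine (decays_ext _ _ _ Dc')]; intros d; f_equal; lia.
Qed.

Record moments (nu : Z -> R) (m0 m1 m2 : R) : Prop := {
  moments_nonneg : forall d, 0 <= nu d;
  moments_0 : is_zsum nu m0;
  moments_1 : is_zsum (fun d => IZR d * nu d) m1;
  moments_2 : is_zsum (fun d => IZR d ^ 2 * nu d) m2 }.

Lemma moments_ext nu nu' m0 m1 m2 :
  (forall d, nu d = nu' d) -> moments nu m0 m1 m2 -> moments nu' m0 m1 m2.
Proof.
  intros E [P H0 H1 H2]; split;
    [intros d; rewrite <- E; apply P
    |refine (is_zsum_ext _ _ _ _ H0)|refine (is_zsum_ext _ _ _ _ H1)|refine (is_zsum_ext _ _ _ _ H2)];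
    intros d; now rewrite E.
Qed.

Lemma moments_unique nu m0 m1 m2 m0' m1' m2' :
  moments nu m0 m1 m2 -> moments nu m0' m1' m2' -> m0 = m0' /\ m1 = m1' /\ m2 = m2'.
Proof.
  intros [_ A0 A1 A2] [_ B0 B1 B2].
  repeat split; eapply is_zsum_unique; eassumption.
Qed.

Lemma moments_decays nu m0 m1 m2 : moments nu m0 m1 m2 ->
  decays nu /\ decays (fun d => IZR d * nu d) /\ decays (fun d => IZR d ^ 2 * nu d).
Proof.
  intros [P H0 H1 H2].
  assert (D0 : decays nu) by exact (decays_of_is_zsum _ _ P H0).
  assert (D2 : decays (fun d => IZR d ^ 2 * nu d)).
  { apply (decays_of_is_zsum _ m2); [intros d; pose proof (P d); nra|exact H2]. }
  split; [exact D0|split; [|exact D2]].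
  apply (decays_dominated _ (fun d => nu d + IZR d ^ 2 * nu d)); [|now apply decays_plus].
  intros d; rewrite Rabs_mult, (Rabs_pos_eq (nu d)) by apply P; pose proof (P d).
  assert (Rabs (IZR d) <= 1 + IZR d ^ 2) by (destruct (Rle_dec 0 (IZR d));
         [rewrite Rabs_pos_eq|rewrite Rabs_left]; nra); nra.
Qed.

Lemma moments_shift nu m0 m1 m2 (c : Z) : moments nu m0 m1 m2 ->
  moments (fun d => nu (d - c)%Z) m0 (m1 + IZR c * m0) (m2 + 2 * IZR c * m1 + IZR c ^ 2 * m0).
Proof.
  intros M; destruct (moments_decays _ _ _ _ M) as (D0 & D1 & D2); destruct M as [P H0 H1 H2].
  assert (Hshift : forall h l, is_zsum h l -> decays h -> is_zsum (fun d => h (d - c)%Z) l).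
  { intros h l H D; refine (is_zsum_ext _ _ _ _ (is_zsum_shift h l (- c) H D)).
    intros d; f_equal; lia. }
  split.
  - intros d; apply P.
  - exact (Hshift _ _ H0 D0).
  - refine (is_zsum_ext _ _ _ _ (Hshift (fun e => IZR e * nu e + IZR c * nu e) _
      (is_zsum_plus _ _ _ _ H1 (is_zsum_scal _ _ _ H0)) (decays_plus _ _ D1 (decays_scal _ _ D0)))).
    intros d; rewrite minus_IZR; ring.
  - refine (is_zsum_ext _ _ _ _ (Hshift
      (fun e => IZR e ^ 2 * nu e + 2 * IZR c * (IZR e * nu e) + IZR c ^ 2 * nu e) _
      (is_zsum_plus _ _ _ _ (is_zsum_plus _ _ _ _ H2 (is_zsum_scal _ _ _ H1)) (is_zsum_scal _ _ _ H0))
      (decays_plus _ _ (decays_plus _ _ D2 (decays_scal _ _ D1)) (decays_scal _ _ D0)))).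
    intros d; rewrite minus_IZR; ring.
Qed.

Lemma moments_mix a c nu nu' m0 m1 m2 m0' m1' m2' : 0 <= a -> 0 <= c ->
  moments nu m0 m1 m2 -> moments nu' m0' m1' m2' ->
  moments (fun d => a * nu d + c * nu' d) (a * m0 + c * m0') (a * m1 + c * m1') (a * m2 + c * m2').
Proof.
  intros Ha Hc [P A0 A1 A2] [P' B0 B1 B2]; split.
  - intros d; pose proof (P d); pose proof (P' d); nra.
  - exact (is_zsum_plus _ _ _ _ (is_zsum_scal _ _ _ A0) (is_zsum_scal _ _ _ B0)).
  - refine (is_zsum_ext _ _ _ _ (is_zsum_plus _ _ _ _ (is_zsum_scal a _ _ A1) (is_zsum_scal c _ _ B1))).
    intros d; ring.
  - refine (is_zsum_ext _ _ _ _ (is_zsum_plus _ _ _ _ (is_zsum_scal a _ _ A2) (is_zsum_scal c _ _ B2))).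
    intros d; ring.
Qed.

Lemma sum_sym_point h d0 K : (forall d, d <> d0 -> h d = 0) ->
  sum_sym h K = if Z.leb (Z.abs d0) (Z.of_nat K) then h d0 else 0.
Proof.
  intros Hh; induction K as [|K IH].
  - simpl sum_sym; destruct (Z.eq_dec d0 0) as [->|]; [reflexivity|].
    rewrite Hh by auto; destruct (Z.leb_spec (Z.abs d0) (Z.of_nat 0)); [lia|reflexivity].
  - change (sum_sym h (S K)) with (sum_sym h K + h (Z.of_nat (S K)) + h (- Z.of_nat (S K))%Z).
    rewrite IH; destruct (Z.leb_spec (Z.abs d0) (Z.of_nat K));
      destruct (Z.leb_spec (Z.abs d0) (Z.of_nat (S K))); try lia.
    + rewrite (Hh (Z.of_nat (S K))), (Hh (- Z.of_nat (S K))%Z) by lia; ring.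
    + destruct (Z.eq_dec d0 (Z.of_nat (S K))) as [->|];
        [rewrite (Hh (- _)%Z)|rewrite (Hh (Z.of_nat _)); replace d0 with (- Z.of_nat (S K))%Z]; try lia; ring.
    + rewrite (Hh (Z.of_nat (S K))), (Hh (- Z.of_nat (S K))%Z) by lia; ring.
Qed.

Lemma is_zsum_point h d0 : (forall d, d <> d0 -> h d = 0) -> is_zsum h (h d0).
Proof.
  intros Hh; apply is_lim_seq_ext_loc with (fun _ => h d0); [|apply is_lim_seq_const].
  exists (Z.to_nat (Z.abs d0)); intros K HK; rewrite (sum_sym_point h d0) by exact Hh.
  destruct (Z.leb_spec (Z.abs d0) (Z.of_nat K)); [reflexivity|lia].
Qed.

Lemma moments_indicator d0 :
  moments (fun d => indicator (Z.eqb d d0)) 1 (IZR d0) (IZR d0 ^ 2).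
Proof.
  assert (Hz : forall k d, d <> d0 -> IZR d ^ k * indicator (Z.eqb d d0) = 0)
    by (intros k d Hd; apply Z.eqb_neq in Hd; rewrite Hd; simpl; ring).
  assert (H : forall k, is_zsum (fun d => IZR d ^ k * indicator (Z.eqb d d0)) (IZR d0 ^ k)).
  { intros k; pose proof (is_zsum_point _ d0 (Hz k)) as H; cbv beta in H.
    now rewrite Z.eqb_refl, Rmult_1_r in H. }
  split.
  - intros d; unfold indicator; destruct (Z.eqb d d0); lra.
  - rewrite <- (pow_O (IZR d0)); refine (is_zsum_ext _ _ _ _ (H 0%nat)); intros d; simpl; ring.
  - rewrite <- (pow_1 (IZR d0)); refine (is_zsum_ext _ _ _ _ (H 1%nat)); intros d; simpl; ring.
  - exact (H 2%nat).
Qed.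

Lemma Var_mu_of_moments b r m M : moments (mu b r) 1 m M -> Var_mu b r = M - m ^ 2.
Proof.
  intros [_ H0 H1 H2]; unfold Var_mu.
  replace (mean_mu b r) with m by (symmetry; exact (zsum_of_is_zsum _ _ H1)).
  apply zsum_of_is_zsum; replace (M - m ^ 2) with (M + -2 * m * m + m ^ 2 * 1) by ring.
  refine (is_zsum_ext _ _ _ _
    (is_zsum_plus _ _ _ _ (is_zsum_plus _ _ _ _ H2 (is_zsum_scal (-2 * m) _ _ H1)) (is_zsum_scal (m ^ 2) _ _ H0))).
  intros d; ring.
Qed.

(** * The law mu^(1) *)

Lemma sum_sym_shift_le g K (c : nat) : (forall e, 0 <= g e) ->
  (forall e, (Z.of_nat K < e)%Z -> g e = 0) ->
  sum_sym (fun d => g (d + Z.of_nat c)%Z) K <= sum_sym g K.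
Proof.
  intros Hg Hlarge; induction c as [|c IH].
  - right; apply sum_sym_ext; intros d; f_equal; lia.
  - pose proof (sum_sym_shift_succ (fun e => g (e + Z.of_nat c)%Z) K) as E; cbv beta in E.
    rewrite (sum_sym_ext _ (fun d => g (d + 1 + Z.of_nat c)%Z)) by (intros d; f_equal; lia).
    rewrite E, (Hlarge (Z.of_nat K + 1 + Z.of_nat c)%Z) by lia.
    pose proof (Hg (- Z.of_nat K + Z.of_nat c)%Z); lra.
Qed.

(* [mu b 1] is the geometric law [P(1 - j (b - 1)) = (b - 1) / b^(j+1)]; we only use the
   self-similarity below, which determines its moments once they are known to exist. *)
Section Geometric.

Variable b : nat.
Hypothesis hb : (2 <= b)%nat.
Variable nu : Z -> R.
Hypothesis nu_nonneg : forall d, 0 <= nu d.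
Hypothesis nu_large : forall d, (2 <= d)%Z -> nu d = 0.
Hypothesis nu_rec : forall d,
  nu d = (INR b - 1) / INR b * indicator (Z.eqb d 1) + / INR b * nu (d + (Z.of_nat b - 1))%Z.

Lemma INR_b_ge_2 : 2 <= INR b.
Proof. apply (le_INR 2) in hb; simpl in hb; lra. Qed.

Lemma weighted_nonneg k x d : 1 <= x -> 0 <= (x - IZR d) ^ k * nu d.
Proof.
  intros Hx; destruct (Z_le_gt_dec 2 d) as [Hd|Hd]; [rewrite nu_large by exact Hd; lra|].
  apply Rmult_le_pos, nu_nonneg; apply pow_le.
  assert (IZR d <= 1) by (apply IZR_le; lia); lra.
Qed.

(* With h_k(d) = (1 - d)^k nu(d) and g_k(e) = (b - e)^k nu(e), the recursion reads
   b h_k(d) = (b - 1) [d = 1] + g_k(d + b - 1); on a symmetric window the shift by b - 1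
   can only lose mass, because g_k vanishes beyond 1. *)
Lemma partial_moment_bound k C :
  (forall K, sum_sym (fun d => (INR b - IZR d) ^ k * nu d) K <=
             sum_sym (fun d => (1 - IZR d) ^ k * nu d) K + (INR b - 1) * C) ->
  forall K, sum_sym (fun d => (1 - IZR d) ^ k * nu d) K <= 1 + C.
Proof.
  intros HC; pose proof INR_b_ge_2 as HB.
  assert (Hmain : forall K, (1 <= K)%nat -> sum_sym (fun d => (1 - IZR d) ^ k * nu d) K <= 1 + C).
  { intros K HK.
    set (g := fun e => (INR b - IZR e) ^ k * nu e).
    assert (Hrec : sum_sym (fun d => (1 - IZR d) ^ k * nu d) K =
      (INR b - 1) / INR b * sum_sym (fun d => (1 - IZR d) ^ k * indicator (Z.eqb d 1)) K
      + / INR b * sum_sym (fun d => g (d + Z.of_nat (b - 1))%Z) K).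
    { rewrite <- !sum_sym_scal, <- sum_sym_plus; apply sum_sym_ext; intros d.
      unfold g; rewrite nu_rec at 1; rewrite plus_IZR, <- INR_IZR_INZ.
      replace (Z.of_nat (b - 1)) with (Z.of_nat b - 1)%Z by lia.
      rewrite minus_INR by lia; simpl (INR 1).
      replace (INR b - (IZR d + (INR b - 1))) with (1 - IZR d) by ring; ring. }
    assert (Hind : sum_sym (fun d => (1 - IZR d) ^ k * indicator (Z.eqb d 1)) K <= 1).
    { rewrite (sum_sym_point _ 1) by (intros d Hd; apply Z.eqb_neq in Hd; rewrite Hd; simpl; ring).
      rewrite Z.eqb_refl; simpl indicator; destruct (Z.leb _ _); [|lra].
      replace (1 - IZR 1) with 0 by (simpl; ring); destruct k; simpl; lra. }
    assert (Hshift : sum_sym (fun d => g (d + Z.of_nat (b - 1))%Z) K <= sum_sym g K).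
    { apply sum_sym_shift_le; [intros e; apply weighted_nonneg; lra|].
      intros e He; unfold g; rewrite nu_large by lia; ring. }
    specialize (HC K); fold g in HC.
    set (T := sum_sym (fun d => (1 - IZR d) ^ k * nu d) K) in *.
    set (I := sum_sym (fun d => (1 - IZR d) ^ k * indicator (Z.eqb d 1)) K) in *.
    assert (INR b * T = (INR b - 1) * I + sum_sym (fun d => g (d + Z.of_nat (b - 1))%Z) K)
      by (rewrite Hrec; field; lra).
    apply (Rmult_le_reg_l (INR b - 1)); nra. }
  intros [|K]; [|apply Hmain; lia].
  apply (Rle_trans _ _ _ (sum_sym_le_succ _ 0 (fun d => weighted_nonneg k 1 d (Rle_refl 1)))).
  apply Hmain; lia.
Qed.

Lemma geometric_moments_exist : exists m0 m1 m2, moments nu m0 m1 m2.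
Proof.
  pose proof INR_b_ge_2 as HB.
  set (h := fun k d => (1 - IZR d) ^ k * nu d).
  assert (Hh : forall k d, 0 <= h k d) by (intros; apply weighted_nonneg; lra).
  (* [b - d = (1 - d) + (b - 1)], expanded binomially *)
  assert (B0 : forall K, sum_sym (h 0%nat) K <= 1 + 0).
  { apply partial_moment_bound; intros K; right; rewrite Rmult_0_r, Rplus_0_r.
    apply sum_sym_ext; intros d; simpl; ring. }
  assert (B1 : forall K, sum_sym (h 1%nat) K <= 1 + 1).
  { apply partial_moment_bound; intros K.
    rewrite (sum_sym_ext _ (fun d => h 1%nat d + (INR b - 1) * h 0%nat d))
      by (intros d; unfold h; simpl; ring).
    rewrite sum_sym_plus, sum_sym_scal; specialize (B0 K); fold (h 1%nat); nra. }
  assert (B2 : forall K, sum_sym (h 2%nat) K <= 1 + (4 + (INR b - 1))).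
  { apply partial_moment_bound; intros K.
    rewrite (sum_sym_ext _ (fun d => h 2%nat d + (2 * (INR b - 1) * h 1%nat d + (INR b - 1) ^ 2 * h 0%nat d)))
      by (intros d; unfold h; simpl; ring).
    rewrite !sum_sym_plus, !sum_sym_scal; specialize (B0 K); specialize (B1 K); fold (h 2%nat).
    assert (0 <= (INR b - 1) * (2 - sum_sym (h 1%nat) K)) by (apply Rmult_le_pos; lra).
    assert (0 <= (INR b - 1) ^ 2 * (1 - sum_sym (h 0%nat) K)) by (apply Rmult_le_pos; [apply pow2_ge_0|lra]).
    nra. }
  destruct (is_zsum_of_bounded _ _ (Hh 0%nat) B0) as [W0 H0].
  destruct (is_zsum_of_bounded _ _ (Hh 1%nat) B1) as [W1 H1].
  destruct (is_zsum_of_bounded _ _ (Hh 2%nat) B2) as [W2 H2].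
  exists W0, (W0 - W1), (W0 - 2 * W1 + W2); split.
  - exact nu_nonneg.
  - refine (is_zsum_ext _ _ _ _ H0); intros d; unfold h; simpl; ring.
  - replace (W0 - W1) with (W0 + -1 * W1) by ring.
    refine (is_zsum_ext _ _ _ _ (is_zsum_plus _ _ _ _ H0 (is_zsum_scal _ _ _ H1))).
    intros d; unfold h; simpl; ring.
  - replace (W0 - 2 * W1 + W2) with (W0 + -2 * W1 + W2) by ring.
    refine (is_zsum_ext _ _ _ _ (is_zsum_plus _ _ _ _ (is_zsum_plus _ _ _ _ H0 (is_zsum_scal _ _ _ H1)) H2)).
    intros d; unfold h; simpl; ring.
Qed.

Lemma geometric_moments : moments nu 1 0 (INR b).
Proof.
  pose proof INR_b_ge_2 as HB.
  destruct geometric_moments_exist as (m0 & m1 & m2 & M).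
  pose proof (moments_mix ((INR b - 1) / INR b) (/ INR b) _ _ _ _ _ _ _ _
    ltac:(apply Rdiv_le_0_compat; lra) ltac:(apply Rlt_le, Rinv_0_lt_compat; lra)
    (moments_indicator 1) (moments_shift _ _ _ _ (- (Z.of_nat b - 1)) M)) as Mrec.
  apply (moments_ext _ nu) in Mrec;
    [|intros d; rewrite (nu_rec d); now replace (d - - (Z.of_nat b - 1))%Z with (d + (Z.of_nat b - 1))%Z by lia].
  destruct (moments_unique _ _ _ _ _ _ _ M Mrec) as (E0 & E1 & E2).
  rewrite opp_IZR, minus_IZR, <- INR_IZR_INZ in E1, E2; simpl (IZR 1) in E1, E2.
  assert (V0 : m0 = 1).
  { assert (INR b * m0 = INR b - 1 + m0) by (rewrite E0 at 1; field; lra).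
    apply (Rmult_eq_reg_l (INR b - 1)); nra. }
  assert (V1 : m1 = 0).
  { assert (INR b * m1 = INR b - 1 + m1 - (INR b - 1) * m0) by (rewrite E1 at 1; field; lra).
    apply (Rmult_eq_reg_l (INR b - 1)); nra. }
  assert (V2 : m2 = INR b).
  { assert (INR b * m2 = INR b - 1 + m2 - 2 * (INR b - 1) * m1 + (INR b - 1) ^ 2 * m0)
      by (rewrite E2 at 1; field; lra).
    apply (Rmult_eq_reg_l (INR b - 1)); nra. }
  now rewrite V0, V1, V2 in M.
Qed.

End Geometric.

(** * The variance recursion *)

Section VarianceRecursion.

Variable b : nat.
Hypothesis hb : (2 <= b)%nat.

Lemma moments_mu_digit_rec q t Vq Vq1 : (t <= b)%nat ->
  moments (mu b q) 1 0 Vq -> moments (mu b (q + 1)) 1 0 Vq1 ->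
  moments (mu b (b * q + t)) 1 0
    ((INR (b - t) * (Vq + INR t ^ 2) + INR t * (Vq1 + (INR b - INR t) ^ 2)) / INR b).
Proof.
  intros ht Mq Mq1.
  assert (HB : 0 < INR b) by (apply lt_0_INR; lia).
  pose proof (moments_mix (INR (b - t) / INR b) (INR t / INR b) _ _ _ _ _ _ _ _
    ltac:(apply Rdiv_le_0_compat; [apply pos_INR|lra]) ltac:(apply Rdiv_le_0_compat; [apply pos_INR|lra])
    (moments_shift _ _ _ _ (Z.of_nat t) Mq) (moments_shift _ _ _ _ (Z.of_nat t - Z.of_nat b) Mq1)) as M.
  rewrite minus_IZR, <- !INR_IZR_INZ, minus_INR in M by exact ht.
  match type of M with moments _ ?m0 ?m1 ?m2 =>
    replace m0 with 1 in M by (field; lra);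
    replace m1 with 0 in M by (field; lra);
    replace m2 with ((INR (b - t) * (Vq + INR t ^ 2) + INR t * (Vq1 + (INR b - INR t) ^ 2)) / INR b)
      in M by (rewrite minus_INR by exact ht; field; lra)
  end.
  refine (moments_ext _ _ _ _ _ _ M); intros d.
  rewrite mu_digit_rec, minus_INR by assumption.
  replace (d - Z.of_nat t + Z.of_nat b)%Z with (d - (Z.of_nat t - Z.of_nat b))%Z by lia.
  field; lra.
Qed.

Lemma moments_mu_0 : moments (mu b 0) 1 0 0.
Proof.
  pose proof (moments_indicator 0) as M; simpl (IZR 0) in M; rewrite pow_i in M by lia.
  exact (moments_ext _ _ _ _ _ (fun d => eq_sym (mu_0 b d hb)) M).
Qed.

Lemma moments_mu_1 : moments (mu b 1) 1 0 (INR b).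
Proof.
  apply geometric_moments; [exact hb|intros d; now apply mu_nonneg| |].
  - intros d; now apply mu_1_large.
  - intros d; now apply mu_1_rec.
Qed.

Lemma moments_mu_exists r : exists V, moments (mu b r) 1 0 V.
Proof.
  induction r as [r IH] using lt_wf_ind.
  destruct (Nat.eq_dec r 0) as [->|Hr0]; [exists 0; exact moments_mu_0|].
  destruct (Nat.eq_dec r 1) as [->|Hr1]; [exists (INR b); exact moments_mu_1|].
  pose proof (Nat.div_mod_eq r b) as Er; pose proof (Nat.mod_upper_bound r b ltac:(lia)).
  rewrite Er; set (q := (r / b)%nat) in *; set (t := (r mod b)%nat) in *.
  destruct (IH q ltac:(apply Nat.div_lt; lia)) as [Vq Mq].
  destruct (Nat.eq_dec t 0) as [Ht0|Ht0].
  - exists Vq; refine (moments_ext _ _ _ _ _ _ Mq); intros d.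
    rewrite Ht0, mu_digit_rec, Nat.sub_0_r, Z.sub_0_r by lia; simpl (INR 0).
    field; apply not_0_INR; lia.
  - destruct (IH (q + 1)%nat ltac:(nia)) as [Vq1 Mq1].
    eexists; apply moments_mu_digit_rec; [lia|exact Mq|exact Mq1].
Qed.

Lemma moments_mu r : moments (mu b r) 1 0 (Var_mu b r).
Proof.
  destruct (moments_mu_exists r) as [V M].
  rewrite (Var_mu_of_moments _ _ _ _ M), pow_i, Rminus_0_r by lia; exact M.
Qed.

Lemma Var_mu_digit_rec q t : (t <= b)%nat ->
  Var_mu b (b * q + t) =
  (INR (b - t) * (Var_mu b q + INR t ^ 2) + INR t * (Var_mu b (q + 1) + (INR b - INR t) ^ 2)) / INR b.
Proof.
  intros ht; pose proof (moments_mu_digit_rec q t _ _ ht (moments_mu q) (moments_mu (q + 1))) as M.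
  rewrite (Var_mu_of_moments _ _ _ _ M); ring.
Qed.

Lemma Var_mu_succ_sub r :
  let q := (r / b)%nat in let t := (r mod b)%nat in
  Var_mu b (r + 1) - Var_mu b r = (Var_mu b (q + 1) - Var_mu b q) / INR b + (INR b - 1 - 2 * INR t).
Proof.
  intros q t; pose proof (Nat.div_mod_eq r b); pose proof (Nat.mod_upper_bound r b ltac:(lia)).
  replace (r + 1)%nat with (b * q + (t + 1))%nat by lia; replace r with (b * q + t)%nat at 1 by lia.
  rewrite !Var_mu_digit_rec, !minus_INR, plus_INR by lia; simpl (INR 1).
  field; apply not_0_INR; lia.
Qed.

Lemma Var_mu_succ_sub_bound r : Rabs (Var_mu b (r + 1) - Var_mu b r) <= INR b.
Proof.
  assert (HB : 2 <= INR b) by (apply (le_INR 2) in hb; simpl in hb; lra).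
  induction r as [r IH] using lt_wf_ind.
  destruct (Nat.eq_dec r 0) as [->|Hr0].
  { change (0 + 1)%nat with 1%nat.
    rewrite (Var_mu_of_moments _ _ _ _ moments_mu_0), (Var_mu_of_moments _ _ _ _ moments_mu_1).
    rewrite Rabs_pos_eq; simpl; lra. }
  rewrite Var_mu_succ_sub; cbv zeta.
  specialize (IH (r / b)%nat ltac:(apply Nat.div_lt; lia)).
  pose proof (Nat.mod_upper_bound r b ltac:(lia)).
  assert (INR (r mod b) + 1 <= INR b) by (rewrite <- S_INR; apply le_INR; lia).
  pose proof (pos_INR (r mod b)).
  assert (Rabs ((Var_mu b (r / b + 1) - Var_mu b (r / b)) / INR b) <= 1).
  { rewrite Rabs_div, (Rabs_pos_eq (INR b)) by lra.
    apply (Rmult_le_reg_r (INR b)); [lra|]; field_simplify; lra. }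
  apply Rabs_le_between in H2; apply Rabs_le; lra.
Qed.

End VarianceRecursion.

Theorem mainTheorem14 (b r : nat) (hb : (2 <= b)%nat) (hr : (1 <= r)%nat) :
  Rabs (Var_mu b (r + 1) - Var_mu b r) <= INR b.
Proof. exact (Var_mu_succ_sub_bound b hb r). Qed.
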